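(* The normalizer of $\widehat{\operatorname{PC}^{+}_{\mathrm{rc}}}$ in $\widehat{\operatorname{PC}^{\bowtie}}$ is $\widehat{\operatorname{PC}^{+}_{\mathrm{rc}}}$.
   Context: $X=[0,1[$. $\widehat{\operatorname{PC}^{\bowtie}}$ is the group of bijections $X\to X$ continuous outside a finite subset; $\widehat{\operatorname{PC}^{+}}$ is the subgroup of those $h$ for which there is a finite partition of $X$ into intervals $[a,b[$ with $h$ continuous and increasing on each $]a,b[$; $\widehat{\operatorname{PC}^{+}_{\mathrm{rc}}}$ is the subgroup of right-continuous elements of $\widehat{\operatorname{PC}^{+}}$. *)

From Stdlib Require Import Reals List.
Open Scope R_scope.

(* X = [0,1[ ; maps of X are represented by functions R -> R, and all the
   predicates below only depend on their values on X. *)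
Definition inX (x : R) : Prop := 0 <= x < 1.

Definition bij_X (h : R -> R) : Prop :=
  (forall x, inX x -> inX (h x)) /\
  (forall x y, inX x -> inX y -> h x = h y -> x = y) /\
  (forall y, inX y -> exists x, inX x /\ h x = y).

Definition cont_at_X (h : R -> R) (x : R) : Prop :=
  forall eps, 0 < eps -> exists delta, 0 < delta /\
    forall y, inX y -> Rabs (y - x) < delta -> Rabs (h y - h x) < eps.

Definition right_cont_at_X (h : R -> R) (x : R) : Prop :=
  forall eps, 0 < eps -> exists delta, 0 < delta /\
    forall y, inX y -> x <= y -> y < x + delta -> Rabs (h y - h x) < eps.

Definition PC_bowtie (h : R -> R) : Prop :=
  bij_X h /\
  exists F : list R, forall x, inX x -> ~ In x F -> cont_at_X h x.

Definition PC_plus (h : R -> R) : Prop :=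
  PC_bowtie h /\
  exists (n : nat) (a : nat -> R),
    a 0%nat = 0 /\ a n = 1 /\
    (forall i, (i < n)%nat -> a i < a (S i)) /\
    (forall i, (i < n)%nat ->
       (forall x, a i < x < a (S i) -> cont_at_X h x) /\
       (forall x y, a i < x < a (S i) -> a i < y < a (S i) -> x < y -> h x < h y)).

Definition PC_rc (h : R -> R) : Prop :=
  PC_plus h /\ forall x, inX x -> right_cont_at_X h x.

Definition inverse_on_X (g ginv : R -> R) : Prop :=
  forall x, inX x -> inX (ginv x) /\ g (ginv x) = x /\ ginv (g x) = x.

Definition normalizes (H : (R -> R) -> Prop) (g : R -> R) : Prop :=
  forall ginv, inverse_on_X g ginv ->
    (forall k, H k -> H (fun x => g (k (ginv x)))) /\
    (forall k, H k -> H (fun x => ginv (k (g x)))).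

Definition normalizer_in_PC_bowtie (H : (R -> R) -> Prop) (g : R -> R) : Prop :=
  PC_bowtie g /\ normalizes H g.

From Stdlib Require Import Reals List Lra Lia IndefiniteDescription.
From Coquelicot Require Import Rcomplements.
Open Scope R_scope.

(* A map lies in PC^+_rc iff it lies in PC^bowtie and is continuous at every point
   for the Sorgenfrey topology of X, generated by the intervals [a, b[.  Indeed a map
   continuous and increasing on the pieces of a partition is right-continuous and
   nondecreasing to the right; conversely, on an interval where such a map is
   continuous, it attains its maximum over [y, z] only at z, so it is increasing there.
   This characterization is stable under composition and, by the intermediate value
   theorem, under inversion, so PC^+_rc is a group.  Conversely, let g normalize
   PC^+_rc, p in X and c = g p.  Conjugating by g the swap of [c, c+l[ and [c+l, c+2l[
   gives a right-continuous map which moves p but fixes every t with g t outside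
   [c, c+2l[; hence g maps a right neighbourhood of p into [c, c+2l[. *)

Definition cont_within (a b : R) (f : R -> R) (x : R) : Prop :=
  forall eps, 0 < eps -> exists delta, 0 < delta /\
    forall t, a <= t <= b -> Rabs (t - x) < delta -> Rabs (f t - f x) < eps.

Lemma cont_at_X_within a b f x :
  0 <= a -> b < 1 -> cont_at_X f x -> cont_within a b f x.
Proof.
  intros Ha Hb Hf eps Heps. destruct (Hf eps Heps) as [d [Hd Hfd]].
  exists d. split; [exact Hd|]. intros t Ht. apply Hfd. unfold inX; lra.
Qed.

Lemma right_cont_at_X_within a b f :
  0 <= a -> b < 1 -> right_cont_at_X f a -> cont_within a b f a.
Proof.
  intros Ha Hb Hf eps Heps. destruct (Hf eps Heps) as [d [Hd Hfd]].
  exists d. split; [exact Hd|]. intros t Ht Hta.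
  rewrite Rabs_lt_between' in Hta. apply Hfd; unfold inX; lra.
Qed.

Definition clamp (a b t : R) : R := Rmax a (Rmin b t).

Lemma clamp_between a b t : a <= b -> a <= clamp a b t <= b.
Proof. intro Hab. unfold clamp, Rmax, Rmin. repeat destruct Rle_dec; lra. Qed.

Lemma clamp_id a b t : a <= t <= b -> clamp a b t = t.
Proof. intro Ht. unfold clamp, Rmax, Rmin. repeat destruct Rle_dec; lra. Qed.

Lemma clamp_dist a b s t : Rabs (clamp a b s - clamp a b t) <= Rabs (s - t).
Proof.
  unfold clamp, Rmax, Rmin. repeat destruct Rle_dec;
  unfold Rabs; repeat destruct Rcase_abs; lra.
Qed.

(* Composing with the clamp makes the global IVT and extreme value theorem of the
   standard library applicable to maps that are only continuous on [a, b]. *)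
Lemma continuity_clamp_comp a b f : a <= b ->
  (forall x, a <= x <= b -> cont_within a b f x) ->
  continuity (fun t => f (clamp a b t)).
Proof.
  intros Hab Hf t0 eps Heps.
  destruct (Hf _ (clamp_between a b t0 Hab) eps Heps) as [d [Hd Hfd]].
  exists d. split; [exact Hd|]. intros t [_ Ht]. simpl in *. unfold R_dist in *.
  apply Hfd; [apply clamp_between; exact Hab|].
  exact (Rle_lt_trans _ _ _ (clamp_dist a b t t0) Ht).
Qed.

Lemma IVT_within a b f c : a <= b ->
  (forall x, a <= x <= b -> cont_within a b f x) ->
  f a <= c <= f b -> exists x, a <= x <= b /\ f x = c.
Proof.
  intros Hab Hf Hc.
  assert (Hg : continuity (fun t => f (clamp a b t) - c)).
  { apply (continuity_minus _ (fun _ => c)).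
    - apply continuity_clamp_comp; assumption.
    - apply continuity_const. intros ? ?; reflexivity. }
  destruct (IVT_cor _ a b Hg Hab) as [x [Hx Ex]].
  { rewrite !clamp_id by lra. nra. }
  exists x. split; [exact Hx|]. rewrite clamp_id in Ex by exact Hx. lra.
Qed.

Lemma max_within a b f : a <= b ->
  (forall x, a <= x <= b -> cont_within a b f x) ->
  exists m, a <= m <= b /\ forall x, a <= x <= b -> f x <= f m.
Proof.
  intros Hab Hf.
  destruct (continuity_ab_maj (fun t => f (clamp a b t)) a b Hab) as [m [Hm Hmab]].
  { intros c _. apply continuity_clamp_comp; assumption. }
  exists m. split; [exact Hmab|]. intros x Hx.
  specialize (Hm x Hx). rewrite !clamp_id in Hm by assumption. exact Hm.
Qed.

Definition right_incr_at (h : R -> R) (x : R) : Prop :=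
  exists delta, 0 < delta /\ forall t, inX t -> x < t < x + delta -> h x < h t.

Lemma right_incr_cont_lt h y z : 0 <= y -> y < z -> z < 1 ->
  (forall x, y <= x <= z -> cont_within y z h x) ->
  (forall x, y <= x < z -> right_incr_at h x) -> h y < h z.
Proof.
  intros Hy Hyz Hz Hc Hr.
  assert (Hstep : forall x, y <= x < z -> exists t, x < t <= z /\ h x < h t).
  { intros x Hx. destruct (Hr x Hx) as [d [Hd Hhd]].
    pose proof (Rmin_l (x + d / 2) z). pose proof (Rmin_r (x + d / 2) z).
    assert (x < Rmin (x + d / 2) z) by (apply Rmin_glb_lt; lra).
    exists (Rmin (x + d / 2) z). split; [lra|].
    apply Hhd; [unfold inX|]; lra. }
  destruct (max_within y z h) as [m [Hm Hmax]]; [lra|exact Hc|].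
  destruct (Req_dec m z) as [->|Hmz].
  - destruct (Hstep y) as [t [Ht Hyt]]; [lra|].
    specialize (Hmax t ltac:(lra)). lra.
  - destruct (Hstep m) as [t [Ht Hmt]]; [lra|].
    specialize (Hmax t ltac:(lra)). lra.
Qed.

Lemma incr_on_open_interval h u v : 0 <= u -> v <= 1 ->
  (forall x, u < x < v -> cont_at_X h x) ->
  (forall x, u < x < v -> right_incr_at h x) ->
  forall y z, u < y -> y < z -> z < v -> h y < h z.
Proof.
  intros Hu Hv Hc Hr y z Hy Hyz Hz.
  apply right_incr_cont_lt; try lra.
  - intros x Hx. apply cont_at_X_within; [lra|lra|apply Hc; lra].
  - intros x Hx. apply Hr. lra.
Qed.

(* continuity at x of the map X -> X, both sides with the Sorgenfrey topology *)
Definition sorgenfrey_cont_at (h : R -> R) (x : R) : Prop :=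
  forall eps, 0 < eps -> exists delta, 0 < delta /\
    forall t, inX t -> x <= t < x + delta -> h x <= h t < h x + eps.

Definition PC_sorgenfrey (h : R -> R) : Prop :=
  PC_bowtie h /\ forall x, inX x -> sorgenfrey_cont_at h x.

Lemma sorgenfrey_right_cont h x : sorgenfrey_cont_at h x -> right_cont_at_X h x.
Proof.
  intros Hs eps Heps. destruct (Hs eps Heps) as [d [Hd Hhd]].
  exists d. split; [exact Hd|]. intros t Ht Hxt Htd.
  specialize (Hhd t Ht (conj Hxt Htd)). apply Rabs_lt_between'. lra.
Qed.

Lemma sorgenfrey_right_incr h x : bij_X h -> inX x ->
  sorgenfrey_cont_at h x -> right_incr_at h x.
Proof.
  intros [_ [Hinj _]] Hx Hs. destruct (Hs 1) as [d [Hd Hhd]]; [lra|].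
  exists d. split; [exact Hd|]. intros t Ht Hxt.
  destruct (Hhd t Ht ltac:(lra)) as [[Hlt|Heq] _]; [exact Hlt|].
  apply Hinj in Heq; [lra|exact Hx|exact Ht].
Qed.

Lemma sorgenfrey_of_right_cont h x : right_cont_at_X h x ->
  (exists delta, 0 < delta /\ forall t, inX t -> x <= t < x + delta -> h x <= h t) ->
  sorgenfrey_cont_at h x.
Proof.
  intros Hrc [d0 [Hd0 Hge]] eps Heps. destruct (Hrc eps Heps) as [d [Hd Hhd]].
  exists (Rmin d0 d). split; [apply Rmin_pos; assumption|].
  pose proof (Rmin_l d0 d). pose proof (Rmin_r d0 d).
  intros t Ht Hxt. specialize (Hhd t Ht ltac:(lra) ltac:(lra)).
  specialize (Hge t Ht ltac:(lra)). apply Rabs_lt_between' in Hhd. lra.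
Qed.

Lemma sorgenfrey_comp h k x : (forall y, inX y -> inX (h y)) ->
  sorgenfrey_cont_at h x -> sorgenfrey_cont_at k (h x) ->
  sorgenfrey_cont_at (fun y => k (h y)) x.
Proof.
  intros HX Hh Hk eps Heps. destruct (Hk eps Heps) as [dk [Hdk Hkd]].
  destruct (Hh dk Hdk) as [dh [Hdh Hhd]].
  exists dh. split; [exact Hdh|]. intros t Ht Hxt.
  apply Hkd; [apply HX, Ht|apply Hhd; assumption].
Qed.

Lemma finite_punctured_nbhd (L : list R) x :
  exists delta, 0 < delta /\ forall z, x - delta < z < x + delta -> z <> x -> ~ In z L.
Proof.
  induction L as [|s L [d [Hd Hfree]]].
  - exists 1. split; [lra|]. intros z _ _ [].
  - destruct (Req_dec s x) as [->|Hsx].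
    + exists d. split; [exact Hd|]. intros z Hz Hzx [->|Hin]; [|exact (Hfree z Hz Hzx Hin)].
      apply Hzx; reflexivity.
    + assert (Hs : 0 < Rabs (s - x)) by (apply Rabs_pos_lt; lra).
      pose proof (Rmin_l d (Rabs (s - x))). pose proof (Rmin_r d (Rabs (s - x))).
      exists (Rmin d (Rabs (s - x))). split; [apply Rmin_pos; assumption|].
      intros z Hz Hzx [<-|Hin].
      * assert (Rabs (s - x) < Rabs (s - x)) by (apply Rabs_lt_between'; lra). lra.
      * apply (Hfree z); [lra|exact Hzx|exact Hin].
Qed.

Lemma preimage_finite h (L : list R) : bij_X h ->
  exists P, forall x, inX x -> In (h x) L -> In x P.
Proof.
  intros [HX [Hinj Hsur]]. induction L as [|s L [P HP]].
  - exists nil. intros x _ [].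
  - destruct (Rle_dec 0 s) as [Hs0|Hs0]; [destruct (Rlt_dec s 1) as [Hs1|Hs1]|].
    + destruct (Hsur s (conj Hs0 Hs1)) as [x0 [Hx0 Ex0]]. exists (x0 :: P).
      intros x Hx [E|Hin]; [left; apply Hinj; congruence|right; apply HP; assumption].
    + exists P. intros x Hx [E|Hin]; [|apply HP; assumption].
      destruct (HX x Hx). lra.
    + exists P. intros x Hx [E|Hin]; [|apply HP; assumption].
      destruct (HX x Hx). lra.
Qed.

Definition strictly_incr_upto (n : nat) (a : nat -> R) : Prop :=
  forall i, (i < n)%nat -> a i < a (S i).

Lemma strictly_incr_upto_le n a : strictly_incr_upto n a ->
  forall i j, (i <= j)%nat -> (j <= n)%nat -> a i <= a j.
Proof.
  intros Ha i j Hij. induction Hij as [|j Hij IH]; intro Hj; [lra|].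
  specialize (Ha j ltac:(lia)). specialize (IH ltac:(lia)). lra.
Qed.

Lemma next_breakpoint (F : list R) x : x < 1 ->
  exists y, x < y <= 1 /\ (y = 1 \/ In y F) /\ forall s, In s F -> ~ (x < s < y).
Proof.
  intro Hx. induction F as [|s F [y [Hy [Ey Hfree]]]].
  - exists 1. split; [lra|]. split; [left; reflexivity|]. intros s [].
  - destruct (Rlt_dec x s) as [Hxs|Hxs]; [destruct (Rlt_dec s y) as [Hsy|Hsy]|].
    + exists s. split; [lra|]. split; [right; left; reflexivity|].
      intros s' [<-|Hin]; [lra|]. intro. apply (Hfree s' Hin). lra.
    + exists y. split; [lra|]. split; [destruct Ey; [left|right; right]; assumption|].
      intros s' [<-|Hin]; [lra|]. apply Hfree, Hin.
    + exists y. split; [lra|]. split; [destruct Ey; [left|right; right]; assumption|].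
      intros s' [<-|Hin]; [lra|]. apply Hfree, Hin.
Qed.

Lemma partition_avoiding (F : list R) x : x < 1 ->
  exists n a, a 0%nat = x /\ a n = 1 /\ strictly_incr_upto n a /\
    forall i, (i < n)%nat -> forall s, In s F -> ~ (a i < s < a (S i)).
Proof.
  remember (length F) as k eqn:Hk. revert F x Hk.
  induction k as [k IH] using (well_founded_induction Wf_nat.lt_wf).
  intros F x Hk Hx.
  destruct (next_breakpoint F x Hx) as [y [[Hxy Hy1] [Ey Hfree]]].
  destruct (Req_dec y 1) as [->|Hy].
  - exists 1%nat, (fun j => match j with O => x | S _ => 1 end).
    split; [reflexivity|]. split; [reflexivity|]. split.
    + intros i Hi. replace i with 0%nat by lia. exact Hxy.
    + intros i Hi. replace i with 0%nat by lia. exact Hfree.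
  - assert (HyF : In y F) by (destruct Ey; [lra|assumption]).
    set (above := fun s => if Rlt_dec y s then true else false).
    assert (Habove : forall s, In s (filter above F) <-> In s F /\ y < s).
    { intro s. rewrite filter_In. unfold above. destruct Rlt_dec; intuition easy. }
    assert (Hlen : (length (filter above F) < k)%nat).
    { assert (Hin : In y (filter (fun s => negb (above s)) F)).
      { apply filter_In. split; [exact HyF|]. unfold above. destruct Rlt_dec; [lra|reflexivity]. }
      assert (length (filter (fun s => negb (above s)) F) <> 0%nat).
      { intro E. apply length_zero_iff_nil in E. rewrite E in Hin. exact Hin. }
      pose proof (filter_length above F). lia. }
    destruct (IH _ Hlen (filter above F) y eq_refl ltac:(lra))
      as [n [b [Eb0 [Ebn [Hb Hbfree]]]]].
    exists (S n), (fun j => match j with O => x | S j => b j end).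
    split; [reflexivity|]. split; [exact Ebn|]. split.
    + intros [|i] Hi; [rewrite Eb0; exact Hxy|apply Hb; lia].
    + intros [|i] Hi s Hs; [rewrite Eb0; apply Hfree, Hs|].
      intro Hbs. apply (Hbfree i ltac:(lia) s); [|exact Hbs].
      pose proof (strictly_incr_upto_le n b Hb 0 i ltac:(lia) ltac:(lia)).
      apply Habove. split; [exact Hs|lra].
Qed.

Lemma partition_cover n a : a 0%nat = 0 -> a n = 1 -> strictly_incr_upto n a ->
  forall x, inX x -> exists i, (i < n)%nat /\ a i <= x < a (S i).
Proof.
  intros H0 Hn Ha x [Hx0 Hx1].
  assert (Hcov : forall m, (m <= n)%nat -> x < a m ->
    exists i, (i < m)%nat /\ a i <= x < a (S i)).
  { induction m as [|m IH]; intros Hm Hxm; [lra|].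
    destruct (Rlt_or_le x (a m)) as [Hlt|Hle].
    - destruct (IH ltac:(lia) Hlt) as [i [Hi Hxi]]. exists i. split; [lia|exact Hxi].
    - exists m. split; [lia|]. split; assumption. }
  apply Hcov; [lia|lra].
Qed.

Lemma right_limit_le h p t : right_cont_at_X h p -> inX p -> inX t -> p < t ->
  (forall s, p < s < t -> h s < h t) -> h p <= h t.
Proof.
  intros Hrc Hp Ht Hpt Hlt. apply Rnot_lt_le. intro Htp.
  destruct (Hrc (h p - h t)) as [d [Hd Hhd]]; [lra|].
  set (s := p + Rmin d (t - p) / 2).
  pose proof (Rmin_l d (t - p)). pose proof (Rmin_r d (t - p)).
  pose proof (Rmin_pos d (t - p) Hd ltac:(lra)).
  assert (Hs : Rabs (h s - h p) < h p - h t) by (apply Hhd; unfold s, inX in *; lra).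
  apply Rabs_lt_between' in Hs. specialize (Hlt s ltac:(unfold s; lra)). lra.
Qed.

Lemma PC_rc_sorgenfrey h : PC_rc h -> PC_sorgenfrey h.
Proof.
  intros [[Hbow [n [a [H0 [Hn [Ha Hpieces]]]]]] Hrc]. split; [exact Hbow|].
  intros p Hp. destruct (partition_cover n a H0 Hn Ha p Hp) as [i [Hi [Hip Hpi]]].
  destruct (Hpieces i Hi) as [_ Hmon].
  apply sorgenfrey_of_right_cont; [apply Hrc, Hp|].
  exists (a (S i) - p). split; [lra|]. intros t Ht [Hpt Hti].
  destruct (Req_dec t p) as [->|Htp]; [lra|].
  apply right_limit_le; [apply Hrc, Hp|exact Hp|exact Ht|lra|].
  intros s Hs. apply Hmon; lra.
Qed.

Lemma PC_sorgenfrey_rc h : PC_sorgenfrey h -> PC_rc h.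
Proof.
  intros [[Hbij [F HF]] Hs].
  destruct (partition_avoiding F 0) as [n [a [H0 [Hn [Ha Hfree]]]]]; [lra|].
  assert (Hpiece : forall i, (i < n)%nat -> 0 <= a i /\ a (S i) <= 1).
  { intros i Hi. rewrite <- H0, <- Hn.
    split; apply (strictly_incr_upto_le n a Ha); lia. }
  assert (Hc : forall i, (i < n)%nat -> forall x, a i < x < a (S i) -> cont_at_X h x).
  { intros i Hi x Hx. specialize (Hpiece i Hi).
    apply HF; [unfold inX; lra|]. intro Hin. exact (Hfree i Hi x Hin Hx). }
  split; [split; [split; [exact Hbij|exists F; exact HF]|]|].
  - exists n, a. split; [exact H0|]. split; [exact Hn|]. split; [exact Ha|].
    intros i Hi. split; [apply Hc, Hi|]. intros x y Hx Hy Hxy.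
    specialize (Hpiece i Hi).
    apply (incr_on_open_interval h (a i) (a (S i))); try lra; [apply Hc, Hi|].
    intros z Hz.
    apply sorgenfrey_right_incr; [exact Hbij|unfold inX; lra|apply Hs; unfold inX; lra].
  - intros x Hx. apply sorgenfrey_right_cont, Hs, Hx.
Qed.

Lemma bij_X_comp h k : bij_X h -> bij_X k -> bij_X (fun x => k (h x)).
Proof.
  intros [HXh [Hih Hsh]] [HXk [Hik Hsk]]. split; [|split].
  - intros x Hx. apply HXk, HXh, Hx.
  - intros x y Hx Hy E. apply Hih; [exact Hx|exact Hy|]. apply Hik; auto.
  - intros z Hz. destruct (Hsk z Hz) as [y [Hy Ey]]. destruct (Hsh y Hy) as [x [Hx Ex]].
    exists x. split; [exact Hx|congruence].
Qed.

Lemma cont_at_X_comp h k x : (forall y, inX y -> inX (h y)) ->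
  cont_at_X h x -> cont_at_X k (h x) -> cont_at_X (fun y => k (h y)) x.
Proof.
  intros HX Hh Hk eps Heps. destruct (Hk eps Heps) as [dk [Hdk Hkd]].
  destruct (Hh dk Hdk) as [dh [Hdh Hhd]].
  exists dh. split; [exact Hdh|]. intros y Hy Hyx. apply Hkd; auto.
Qed.

Lemma PC_bowtie_comp h k : PC_bowtie h -> PC_bowtie k -> PC_bowtie (fun x => k (h x)).
Proof.
  intros [Hh [Fh HFh]] [Hk [Fk HFk]].
  destruct (preimage_finite h Fk Hh) as [P HP].
  split; [apply bij_X_comp; assumption|]. exists (Fh ++ P). intros x Hx Hn.
  apply cont_at_X_comp; [apply Hh|apply HFh; [exact Hx|]|apply HFk; [apply Hh, Hx|]];
    intro Hin; apply Hn, in_or_app; [left; exact Hin|right; apply HP; assumption].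
Qed.

Lemma PC_sorgenfrey_comp h k :
  PC_sorgenfrey h -> PC_sorgenfrey k -> PC_sorgenfrey (fun x => k (h x)).
Proof.
  intros [Hh Hsh] [Hk Hsk]. split; [apply PC_bowtie_comp; assumption|].
  intros x Hx. apply sorgenfrey_comp; [apply Hh|apply Hsh, Hx|apply Hsk, Hh, Hx].
Qed.

Lemma inverse_exists h : bij_X h -> exists hinv, inverse_on_X h hinv.
Proof.
  intros [HX [Hinj Hsur]].
  assert (Hpre : forall y, exists x, inX y -> inX x /\ h x = y).
  { intro y. destruct (Rle_dec 0 y) as [Hy0|Hy0]; [destruct (Rlt_dec y 1) as [Hy1|Hy1]|].
    - destruct (Hsur y (conj Hy0 Hy1)) as [x Hx]. exists x. intros _. exact Hx.
    - exists 0. intros [_ Hy]. lra.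
    - exists 0. intros [Hy _]. lra. }
  destruct (functional_choice _ Hpre) as [hinv Hhinv].
  exists hinv. intros x Hx. destruct (Hhinv x Hx) as [Hix Eix].
  split; [exact Hix|]. split; [exact Eix|].
  destruct (Hhinv (h x) (HX x Hx)) as [Hihx Eihx]. apply Hinj; assumption.
Qed.

Lemma inverse_bij_X h hinv : bij_X h -> inverse_on_X h hinv -> bij_X hinv.
Proof.
  intros [HX _] Hinv. split; [|split].
  - intros y Hy. apply Hinv, Hy.
  - intros y z Hy Hz E.
    destruct (Hinv y Hy) as [_ [Ey _]]. destruct (Hinv z Hz) as [_ [Ez _]]. congruence.
  - intros x Hx. exists (h x). split; [apply HX, Hx|apply Hinv, Hx].
Qed.

Lemma inverse_cont_at h hinv x eta : inverse_on_X h hinv ->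
  0 < eta -> 0 <= x - eta -> x + eta <= 1 ->
  (forall z, x - eta < z < x + eta -> cont_at_X h z) ->
  (forall y z, x - eta < y -> y < z -> z < x + eta -> h y < h z) ->
  cont_at_X hinv (h x).
Proof.
  intros Hinv Heta H0 H1 Hc Hincr eps Heps.
  pose proof (Rmin_l eps eta). pose proof (Rmin_r eps eta).
  pose proof (Rmin_pos eps eta Heps Heta).
  set (e := Rmin eps eta / 2) in *.
  assert (Hlo : h (x - e) < h x) by (apply Hincr; unfold e; lra).
  assert (Hhi : h x < h (x + e)) by (apply Hincr; unfold e; lra).
  pose proof (Rmin_l (h (x + e) - h x) (h x - h (x - e))).
  pose proof (Rmin_r (h (x + e) - h x) (h x - h (x - e))).
  exists (Rmin (h (x + e) - h x) (h x - h (x - e))).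
  split; [apply Rmin_pos; lra|]. intros y Hy Hyx. apply Rabs_lt_between' in Hyx.
  destruct (IVT_within (x - e) (x + e) h y) as [x' [Hx' <-]]; [unfold e; lra| |lra|].
  - intros z Hz. apply cont_at_X_within; [unfold e in *; lra|unfold e in *; lra|].
    apply Hc. unfold e in *; lra.
  - destruct (Hinv x) as [_ [_ ->]]; [unfold inX; lra|].
    destruct (Hinv x') as [_ [_ ->]]; [unfold inX, e in *; lra|].
    apply Rabs_lt_between'. unfold e in *; lra.
Qed.

Lemma inverse_sorgenfrey_cont h hinv x : bij_X h -> inverse_on_X h hinv -> inX x ->
  sorgenfrey_cont_at h x ->
  (exists delta, 0 < delta /\ forall z, x < z < x + delta -> cont_at_X h z) ->
  sorgenfrey_cont_at hinv (h x).
Proof.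
  intros Hbij Hinv Hx Hs [dc [Hdc Hc]] eps Heps.
  destruct (sorgenfrey_right_incr h x Hbij Hx Hs) as [dr [Hdr Hr]].
  assert (H1x : 0 < 1 - x) by (destruct Hx; lra).
  set (m := Rmin (Rmin eps dc) (Rmin dr (1 - x))).
  assert (Hm : 0 < m) by (repeat apply Rmin_pos; assumption).
  assert (Hmle : m <= eps /\ m <= dc /\ m <= dr /\ m <= 1 - x).
  { pose proof (Rmin_l (Rmin eps dc) (Rmin dr (1 - x))).
    pose proof (Rmin_r (Rmin eps dc) (Rmin dr (1 - x))).
    pose proof (Rmin_l eps dc). pose proof (Rmin_r eps dc).
    pose proof (Rmin_l dr (1 - x)). pose proof (Rmin_r dr (1 - x)).
    unfold m; lra. }
  set (b := x + m / 2).
  assert (Hb : h x < h b) by (apply Hr; unfold b, inX in *; lra).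
  exists (h b - h x). split; [lra|]. intros y Hy Hyx.
  destruct (IVT_within x b h y) as [x' [Hx' <-]]; [unfold b; lra| |lra|].
  - intros z Hz. destruct (Req_dec z x) as [->|Hzx].
    + apply right_cont_at_X_within; [destruct Hx; lra|unfold b; lra|].
      apply sorgenfrey_right_cont, Hs.
    + apply cont_at_X_within; [destruct Hx; lra|unfold b; lra|].
      apply Hc. unfold b in *; lra.
  - destruct (Hinv x Hx) as [_ [_ ->]].
    destruct (Hinv x') as [_ [_ ->]]; [unfold inX, b in *; lra|].
    unfold b in *; lra.
Qed.

Lemma PC_sorgenfrey_inv h hinv :
  PC_sorgenfrey h -> inverse_on_X h hinv -> PC_sorgenfrey hinv.
Proof.
  intros [[Hbij [F HF]] Hs] Hinv.
  split; [split; [apply (inverse_bij_X h); assumption|]|].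
  - exists (map h (0 :: F)). intros y Hy Hn.
    destruct (Hinv y Hy) as [Hx [Ey _]]. set (x := hinv y) in *. rewrite <- Ey.
    assert (Hx0 : 0 < x).
    { destruct Hx as [[Hx0|Hx0] _]; [exact Hx0|].
      exfalso. apply Hn. rewrite <- Ey, <- Hx0. apply in_map. left; reflexivity. }
    assert (HxF : ~ In x F) by (intro Hin; apply Hn; rewrite <- Ey; apply in_map; right; exact Hin).
    destruct (finite_punctured_nbhd F x) as [d [Hd Hfree]].
    set (eta := Rmin d (Rmin x (1 - x))).
    assert (Heta : 0 < eta /\ eta <= d /\ eta <= x /\ eta <= 1 - x).
    { pose proof (Rmin_l d (Rmin x (1 - x))). pose proof (Rmin_r d (Rmin x (1 - x))).
      pose proof (Rmin_l x (1 - x)). pose proof (Rmin_r x (1 - x)).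
      destruct Hx. split; [repeat apply Rmin_pos; lra|]. unfold eta; lra. }
    assert (Hc : forall z, x - eta < z < x + eta -> cont_at_X h z).
    { intros z Hz. apply HF; [unfold inX; lra|].
      destruct (Req_dec z x) as [->|Hzx]; [exact HxF|]. apply Hfree; [lra|exact Hzx]. }
    apply (inverse_cont_at h hinv x eta Hinv); try lra; [exact Hc|].
    apply incr_on_open_interval; try lra; [exact Hc|].
    intros z Hz.
    apply sorgenfrey_right_incr; [exact Hbij|unfold inX; lra|apply Hs; unfold inX; lra].
  - intros y Hy. destruct (Hinv y Hy) as [Hx [Ey _]]. set (x := hinv y) in *. rewrite <- Ey.
    apply inverse_sorgenfrey_cont; [exact Hbij|exact Hinv|exact Hx|apply Hs, Hx|].
    destruct (finite_punctured_nbhd F x) as [d [Hd Hfree]]. destruct Hx as [Hx0 Hx1].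
    pose proof (Rmin_l d (1 - x)). pose proof (Rmin_r d (1 - x)).
    exists (Rmin d (1 - x)). split; [apply Rmin_pos; lra|]. intros z Hz.
    apply HF; [unfold inX; lra|]. apply Hfree; lra.
Qed.

Lemma PC_rc_comp h k : PC_rc h -> PC_rc k -> PC_rc (fun x => k (h x)).
Proof.
  intros Hh Hk. apply PC_sorgenfrey_rc, PC_sorgenfrey_comp; apply PC_rc_sorgenfrey; assumption.
Qed.

Lemma PC_rc_inv h hinv : PC_rc h -> inverse_on_X h hinv -> PC_rc hinv.
Proof.
  intros Hh Hinv.
  apply PC_sorgenfrey_rc, (PC_sorgenfrey_inv h); [apply PC_rc_sorgenfrey|]; assumption.
Qed.

Definition swap (c l x : R) : R :=
  if Rle_dec c x then
    if Rlt_dec x (c + l) then x + l else if Rlt_dec x (c + 2 * l) then x - l else x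
  else x.

Ltac swap_cases :=
  unfold swap; repeat match goal with
  | |- context [Rle_dec ?a ?b] => destruct (Rle_dec a b)
  | |- context [Rlt_dec ?a ?b] => destruct (Rlt_dec a b)
  end.

Lemma swap_involutive c l x : 0 < l -> swap c l (swap c l x) = x.
Proof. intro Hl. unfold swap at 2. swap_cases; lra. Qed.

Lemma swap_right_shift c l p : 0 < l ->
  exists delta, 0 < delta /\ forall t, p <= t < p + delta -> swap c l t = t + (swap c l p - p).
Proof.
  intro Hl.
  destruct (Rlt_or_le p c); [|destruct (Rlt_or_le p (c + l));
    [|destruct (Rlt_or_le p (c + 2 * l))]].
  - exists (c - p). split; [lra|]. intros t Ht. swap_cases; lra.
  - exists (c + l - p). split; [lra|]. intros t Ht. swap_cases; lra.
  - exists (c + 2 * l - p). split; [lra|]. intros t Ht. swap_cases; lra.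
  - exists 1. split; [lra|]. intros t Ht. swap_cases; lra.
Qed.

Lemma swap_local_shift c l p : 0 < l -> ~ In p (c :: c + l :: c + 2 * l :: nil) ->
  exists delta, 0 < delta /\
    forall t, p - delta < t < p + delta -> swap c l t = t + (swap c l p - p).
Proof.
  intros Hl Hp.
  destruct (finite_punctured_nbhd (c :: c + l :: c + 2 * l :: nil) p) as [d [Hd Hfree]].
  assert (Hbreak : forall s, In s (c :: c + l :: c + 2 * l :: nil) -> s <= p - d \/ p + d <= s).
  { intros s Hs. destruct (Req_dec s p) as [->|Hsp]; [contradiction|].
    destruct (Rle_or_lt s (p - d)); [left; assumption|].
    destruct (Rle_or_lt (p + d) s); [right; assumption|].
    exfalso. exact (Hfree s ltac:(lra) Hsp Hs). }
  pose proof (Hbreak c ltac:(simpl; auto)).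
  pose proof (Hbreak (c + l) ltac:(simpl; auto)).
  pose proof (Hbreak (c + 2 * l) ltac:(simpl; auto)).
  exists d. split; [exact Hd|]. intros t Ht.
  destruct (Rlt_or_le p c); [|destruct (Rlt_or_le p (c + l));
    [|destruct (Rlt_or_le p (c + 2 * l))]]; swap_cases; lra.
Qed.

Lemma swap_PC_sorgenfrey c l : 0 <= c -> 0 < l -> c + 2 * l < 1 -> PC_sorgenfrey (swap c l).
Proof.
  intros Hc Hl Hcl.
  assert (HX : forall x, inX x -> inX (swap c l x))
    by (intros x Hx; unfold inX in *; swap_cases; lra).
  split; [split; [split; [exact HX|split]|]|].
  - intros x y Hx Hy E. rewrite <- (swap_involutive c l x), <- (swap_involutive c l y), E; auto.
  - intros y Hy. exists (swap c l y). split; [apply HX, Hy|apply swap_involutive, Hl].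
  - exists (c :: c + l :: c + 2 * l :: nil). intros x Hx Hn.
    destruct (swap_local_shift c l x Hl Hn) as [d [Hd Hshift]].
    intros eps Heps. exists (Rmin d eps). split; [apply Rmin_pos; assumption|].
    pose proof (Rmin_l d eps). pose proof (Rmin_r d eps).
    intros y Hy Hyx. apply Rabs_lt_between' in Hyx.
    rewrite (Hshift y), (Hshift x) by lra. apply Rabs_lt_between'. lra.
  - intros p Hp eps Heps. destruct (swap_right_shift c l p Hl) as [d [Hd Hshift]].
    exists (Rmin d eps). split; [apply Rmin_pos; assumption|].
    pose proof (Rmin_l d eps). pose proof (Rmin_r d eps).
    intros t Ht Hpt. rewrite (Hshift t), (Hshift p) by lra. lra.
Qed.

Lemma sorgenfrey_cont_of_conj_stable g ginv p : bij_X g -> inverse_on_X g ginv ->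
  (forall k, PC_rc k -> PC_rc (fun x => ginv (k (g x)))) -> inX p ->
  sorgenfrey_cont_at g p.
Proof.
  intros [HX _] Hinv Hconj Hp eps Heps.
  set (c := g p). assert (Hc : inX c) by (apply HX, Hp).
  set (l := Rmin (eps / 2) ((1 - c) / 4)).
  assert (Hl : 0 < l /\ 2 * l <= eps /\ c + 2 * l < 1).
  { pose proof (Rmin_l (eps / 2) ((1 - c) / 4)). pose proof (Rmin_r (eps / 2) ((1 - c) / 4)).
    destruct Hc. split; [apply Rmin_pos|]; unfold l; lra. }
  assert (Hk : PC_rc (swap c l)).
  { apply PC_sorgenfrey_rc, swap_PC_sorgenfrey; destruct Hc; lra. }
  destruct (Hconj _ Hk) as [_ Hrc].
  assert (HclX : inX (c + l)) by (destruct Hc; unfold inX; lra).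
  destruct (Hinv (c + l) HclX) as [HqX [Eq _]]. set (q := ginv (c + l)) in *.
  assert (Hq : 0 < Rabs (q - p)).
  { apply Rabs_pos_lt. intro E. assert (q = p) as Eqp by lra.
    rewrite Eqp in Eq. fold c in Eq. lra. }
  destruct (Hrc p Hp (Rabs (q - p) / 2)) as [d [Hd Hnear]]; [lra|].
  exists (Rmin d (Rabs (q - p) / 2)). split; [apply Rmin_pos; lra|].
  pose proof (Rmin_l d (Rabs (q - p) / 2)). pose proof (Rmin_r d (Rabs (q - p) / 2)).
  intros t Ht Hpt.
  assert (Hfix : c <= g t < c + 2 * l \/ swap c l (g t) = g t) by (swap_cases; lra).
  destruct Hfix as [Hgt|Hfix]; [lra|exfalso].
  specialize (Hnear t Ht ltac:(lra) ltac:(lra)). cbv beta in Hnear.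
  assert (Epp : swap c l (g p) = c + l) by (fold c; swap_cases; lra).
  rewrite Hfix, Epp in Hnear. fold q in Hnear.
  destruct (Hinv t Ht) as [_ [_ Et]]. rewrite Et in Hnear.
  unfold Rabs in *. repeat destruct Rcase_abs; lra.
Qed.

Theorem proposition5p4 :
  forall g : R -> R, normalizer_in_PC_bowtie PC_rc g <-> PC_rc g.
Proof.
  intro g. split.
  - intros [Hbow Hnorm]. apply PC_sorgenfrey_rc. split; [exact Hbow|]. intros p Hp.
    destruct (inverse_exists g (proj1 Hbow)) as [ginv Hinv].
    apply (sorgenfrey_cont_of_conj_stable g ginv); [apply Hbow|exact Hinv| |exact Hp].
    apply (Hnorm ginv Hinv).
  - intros Hg. split; [apply Hg|]. intros ginv Hinv.
    pose proof (PC_rc_inv g ginv Hg Hinv) as Hginv.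
    split; intros k Hk.
    + exact (PC_rc_comp _ g (PC_rc_comp ginv k Hginv Hk) Hg).
    + exact (PC_rc_comp _ ginv (PC_rc_comp g k Hg Hk) Hginv).
Qed.
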